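(* Let $X$ be a compact space and $\mathcal{A}$ a dense subspace of $C(X)$ (real continuous functions, supremum norm) containing the constant functions and closed under finite lattice operations. Let $L$ be a Lip-norm on $\mathcal{A}$ such that $L(f\vee g)\le L(f)\vee L(g)$ for all $f,g\in\mathcal{A}$. Then $L$ is the restriction to $\mathcal{A}$ of the ordinary Lipschitz seminorm on $C(X)$ corresponding to the metric $\rho_L$ on $X$, i.e. $L(f)=\sup\{|f(x)-f(y)|/\rho_L(\delta_x,\delta_y):x,y\in X,\ x\ne y\}$ for all $f\in\mathcal{A}$.
   Context: $\mathcal{A}$ is an order-unit space with order unit $1$; its states are the continuous linear functionals $\mu$ with $\mu(1)=1=\|\mu\|$, and $\delta_x$ denotes evaluation at $x$. $\rho_L(\mu,\nu)=\sup\{|\mu(f)-\nu(f)|:f\in\mathcal{A},L(f)\le1\}$. A Lip-norm on $\mathcal{A}$ is a finite-valued seminorm $L$ with: (1) $L(f)=0$ iff $f$ is constant; (2) $\{f\in\mathcal{A}:L(f)\le1\}$ is norm-closed in $\mathcal{A}$; (3) the image of $\{f:L(f)\le1\}$ in $\mathcal{A}/\mathbb{R}1$ is totally bounded for the quotient norm. $f\vee g$ is the pointwise maximum. *)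

From HB Require Import structures.
From mathcomp Require Import all_boot all_order all_algebra.
From mathcomp Require Import all_classical all_reals all_analysis.
Set Implicit Arguments. Unset Strict Implicit. Unset Printing Implicit Defensive.
Import Order.TTheory GRing.Theory Num.Theory numFieldNormedType.Exports.
Local Open Scope classical_set_scope.
Local Open Scope ring_scope.

(* A is a set of real functions on X (a subspace of C(X)); L : (X -> R) -> R
   is only meaningful on A. *)

Definition dense_lattice_subspace {R : realType} {X : topologicalType}
  (A : set (X -> R)) : Prop :=
  (forall f, A f -> continuous f) /\
  (forall c : R, A (fun _ => c)) /\
  (forall f g, A f -> A g -> A (fun x => f x + g x)) /\
  (forall (c : R) f, A f -> A (fun x => c * f x)) /\
  (forall f g, A f -> A g -> A (fun x => Num.max (f x) (g x))) /\
  (forall f g, A f -> A g -> A (fun x => Num.min (f x) (g x))) /\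
  (forall f, continuous f -> forall e : R, 0 < e ->
         exists2 g, A g & forall x, `|f x - g x| < e).

Definition seminorm_on {R : realType} {X : Type}
  (A : set (X -> R)) (L : (X -> R) -> R) : Prop :=
  (forall f g, A f -> A g -> L (fun x => f x + g x) <= L f + L g) /\
  (forall (c : R) f, A f -> L (fun x => c * f x) = `|c| * L f).

Definition lip_norm {R : realType} {X : Type}
  (A : set (X -> R)) (L : (X -> R) -> R) : Prop :=
  [/\ seminorm_on A L,
      (forall f, A f -> (L f = 0 <-> exists c : R, f = (fun _ => c))),
      (* (2) {f in A | L f <= 1} is closed in A for the sup norm *)
      (forall f, A f ->
         (forall e : R, 0 < e -> exists2 g, A g /\ L g <= 1 &
             forall x, `|f x - g x| < e) -> L f <= 1)
    & (* (3) its image in A / R1 is totally bounded for the quotient norm *)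
      (forall e : R, 0 < e -> exists s : seq (X -> R),
         (forall g, g \in s -> A g) /\
         (forall f, A f -> L f <= 1 ->
            exists2 g, g \in s & exists c : R, forall x, `|f x - g x - c| < e))].

Definition delta {R : realType} {X : Type} (x : X) : (X -> R) -> R :=
  fun f => f x.

Definition rhoL {R : realType} {X : Type} (A : set (X -> R))
  (L : (X -> R) -> R) (mu nu : (X -> R) -> R) : R :=
  sup [set `|mu f - nu f| | f in [set f | A f /\ L f <= 1]].

(* ordinary Lipschitz seminorm of f w.r.t. the metric d, valued in [0, +oo]
   (the 0 accounts for the convention sup of the empty set = 0) *)
Definition lip_const {R : realType} {X : Type} (d : X -> X -> R)
  (f : X -> R) : \bar R :=
  ereal_sup ([set 0%E] `|`
    [set z | exists x y, x <> y /\ z = (`|f x - f y| / d x y)%:E]).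

From HB Require Import structures.
From mathcomp Require Import all_boot all_order all_algebra.
From mathcomp Require Import all_classical all_reals all_analysis.
From mathcomp Require Import ring lra.
Import Order.TTheory GRing.Theory Num.Theory numFieldNormedType.Exports.
Local Open Scope classical_set_scope.
Local Open Scope ring_scope.

(* Every f in A is L(f)-Lipschitz for rho_L by the very definition of rho_L,
   so only L f <= K has to be shown when f is K-Lipschitz for rho_L (K > 0).
   A near-maximiser of the supremum defining rho_L(x, y), rescaled by K and
   shifted, gives h with L h <= K, h x = f x and h y < f y + e.  The hypothesis
   on L(f \/ g), together with f /\ g = -((-f) \/ (-g)), makes the ball
   {L <= K} a lattice, so by compactness a finite minimum over y and then a
   finite maximum over x of such functions approximate f uniformly within the
   ball; since the ball is closed, L f <= K. *)

Lemma lattice_min_seq {R : realDomainType} {T : Type} (P : set (T -> R))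
    {I : eqType} (h : I -> T -> R) (i0 : I) (s : seq I) :
  (forall u v, P u -> P v -> P (fun z => Num.min (u z) (v z))) ->
  (forall i, P (h i)) ->
  exists2 m, P m &
    (forall z i, i \in s -> m z <= h i z) /\ (forall z, exists i, m z = h i z).
Proof.
move=> P_min P_h; elim: s => [|j s [m Pm [m_le m_eq]]].
  by exists (h i0) => //; split=> // z; exists i0.
exists (fun z => Num.min (h j z) (m z)); first exact: P_min.
split=> z; last by case: leP => _; [exists j | exact: m_eq].
move=> i; rewrite in_cons => /orP[/eqP-> | /(m_le z) mz]; rewrite ge_min ?lexx //.
by rewrite mz orbT.
Qed.

Lemma compact_finite_subcover {X : topologicalType} {I : choiceType}
    (U : I -> set X) :
  compact [set: X] -> (forall i, open (U i)) -> (forall z, exists i, U i z) ->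
  exists s : seq I, forall z, exists2 i, i \in s & U i z.
Proof.
move=> /compact_near_coveringP cptX U_open U_cover.
pose F := filter_from [set: seq I] (fun s => [set t : seq I | {subset s <= t}]).
have F_filter : Filter F.
  apply: filter_from_filter; first by exists [::].
  move=> s1 s2 _ _; exists (s1 ++ s2) => // t st.
  by split=> i ist; apply: st; rewrite mem_cat ist ?orbT.
have [|s _ s_cover] := cptX _ F (fun t z => exists2 i, i \in t & U i z) F_filter.
  move=> x _; have [i Uix] := U_cover x.
  exists (U i, [set t : seq I | {subset [:: i] <= t}]) => [|[z t] [/= Uiz it]].
    by split=> /=; [exact: open_nbhs_nbhs | exists [:: i]].
  by exists i => //; apply: it; rewrite mem_seq1.
by exists s => z; apply: (s_cover s).
Qed.

Lemma open_lt_continuous {R : realType} {X : topologicalType} {u v : X -> R} :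
  continuous u -> continuous v -> open [set z | u z < v z].
Proof.
move=> u_cont v_cont.
have -> : [set z | u z < v z] = (fun z => u z - v z) @^-1` [set r | r < 0].
  by apply/seteqP; split=> z /=; rewrite subr_lt0.
apply: open_comp; last exact: open_lt.
by move=> z _; exact: cvgB (u_cont z) (v_cont z).
Qed.

Lemma compact_lower_envelope {R : realType} {X : topologicalType}
    (P : set (X -> R)) (g : X -> R) (h : X -> X -> R) (x0 : X) :
  compact [set: X] ->
  (forall u v, P u -> P v -> P (fun z => Num.min (u z) (v z))) ->
  (forall y, P (h y)) -> (forall y, continuous (h y)) -> continuous g ->
  (forall y, h y y < g y) ->
  exists2 m, P m & (forall z, m z < g z) /\ (forall z, exists y, m z = h y z).
Proof.
move=> cptX P_min P_h h_cont g_cont h_lt.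
have [s s_cover] := compact_finite_subcover (fun y => [set z | h y z < g z]) cptX
  (fun y => open_lt_continuous (h_cont y) g_cont) (fun z => ex_intro _ z (h_lt z)).
have [m Pm [m_le m_eq]] := lattice_min_seq P h x0 s P_min P_h.
exists m => //; split=> // z; have [y ys hyz] := s_cover z.
exact: le_lt_trans (m_le z y ys) hyz.
Qed.

Section LipConst.
Context {R : realType} {X : Type} (d : X -> X -> R) (f : X -> R).

Lemma lip_const_ge0 : (0 <= lip_const d f)%E.
Proof. by apply: ereal_sup_ubound; left. Qed.

Lemma lip_const_le {K} :
  0 <= K -> (forall x y, `|f x - f y| <= K * d x y) -> (lip_const d f <= K%:E)%E.
Proof.
move=> K0 f_lip; apply: ge_ereal_sup => _ [-> | [x [y [_ ->]]]]; rewrite lee_fin //.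
have [d_pos | d_le0] := ltP 0 (d x y); first by rewrite ler_pdivrMr.
by apply: le_trans K0; rewrite mulr_ge0_le0 // invr_le0.
Qed.

Lemma lipschitz_of_lip_const_le {K x y} :
  (lip_const d f <= K%:E)%E -> 0 < d x y -> `|f x - f y| <= K * d x y.
Proof.
move=> fK; case: (pselect (x = y)) => [<- | xy] d_pos.
  have := le_trans lip_const_ge0 fK; rewrite lee_fin => K0.
  by rewrite subrr normr0 mulr_ge0 // ltW.
rewrite -ler_pdivrMr // -lee_fin; apply: le_trans fK.
by apply: ereal_sup_ubound; right; exists x, y.
Qed.

End LipConst.

Section LatticeLipNorm.
Context {R : realType} {X : topologicalType} (A : set (X -> R))
  (L : (X -> R) -> R).
Hypothesis X_compact : compact [set: X].
Hypothesis A_cont : forall {f}, A f -> continuous f.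
Hypothesis A_const : forall c : R, A (fun _ => c).
Hypothesis A_add : forall {f g}, A f -> A g -> A (fun x => f x + g x).
Hypothesis A_scale : forall (c : R) {f}, A f -> A (fun x => c * f x).
Hypothesis A_max :
  forall {f g}, A f -> A g -> A (fun x => Num.max (f x) (g x)).
Hypothesis A_min :
  forall {f g}, A f -> A g -> A (fun x => Num.min (f x) (g x)).
Hypothesis L_add :
  forall {f g}, A f -> A g -> L (fun x => f x + g x) <= L f + L g.
Hypothesis L_scale :
  forall (c : R) {f}, A f -> L (fun x => c * f x) = `|c| * L f.
Hypothesis L_eq0 :
  forall {f}, A f -> (L f = 0 <-> exists c : R, f = (fun _ => c)).
Hypothesis L_closed : forall f, A f ->
  (forall e : R, 0 < e -> exists2 g, A g /\ L g <= 1 &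
     forall x, `|f x - g x| < e) -> L f <= 1.
Hypothesis L_totally_bounded : forall {e : R}, 0 < e ->
  exists s : seq (X -> R), (forall g, g \in s -> A g) /\
    (forall f, A f -> L f <= 1 ->
       exists2 g, g \in s & exists c : R, forall x, `|f x - g x - c| < e).
Hypothesis L_max : forall {f g}, A f -> A g ->
  L (fun x => Num.max (f x) (g x)) <= Num.max (L f) (L g).

Lemma L_const c : L (fun _ => c) = 0.
Proof. by apply/L_eq0 => //; exists c. Qed.

Lemma fun_oppE (f : X -> R) : (fun x => - f x) = (fun x => -1 * f x).
Proof. by apply: funext => x; rewrite mulN1r. Qed.

Lemma A_opp {f} : A f -> A (fun x => - f x).
Proof. by move=> Af; rewrite fun_oppE; exact: A_scale. Qed.

Lemma L_opp {f} : A f -> L (fun x => - f x) = L f.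
Proof. by move=> Af; rewrite fun_oppE L_scale // normrN normr1 mul1r. Qed.

Lemma L_ge0 {f} : A f -> 0 <= L f.
Proof.
move=> Af; have := L_add Af (A_opp Af).
have -> : (fun x => f x + - f x) = (fun _ => 0) by apply: funext => x; rewrite subrr.
by rewrite L_const L_opp //; lra.
Qed.

Lemma L_min {f g} : A f -> A g ->
  L (fun x => Num.min (f x) (g x)) <= Num.max (L f) (L g).
Proof.
move=> Af Ag.
have -> : (fun x => Num.min (f x) (g x)) = (fun x => - Num.max (- f x) (- g x)).
  by apply: funext => x; rewrite oppr_max !opprK.
rewrite L_opp; last exact: A_max (A_opp Af) (A_opp Ag).
by rewrite -(L_opp Af) -(L_opp Ag); exact: L_max (A_opp Af) (A_opp Ag).
Qed.

Lemma L_affine K c {g} : 0 <= K -> A g ->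
  A (fun z => K * g z + c) /\ L (fun z => K * g z + c) <= K * L g.
Proof.
move=> K0 Ag; split; first exact: A_add (A_scale K Ag) (A_const c).
have := L_add (A_scale K Ag) (A_const c).
by rewrite L_const addr0 L_scale // ger0_norm.
Qed.

Let rho x y := rhoL A L (delta x) (delta y).

Lemma rhoL_has_sup x y :
  has_sup [set `|delta x g - delta y g| | g in [set g | A g /\ L g <= 1]].
Proof.
split.
  exists 0, (fun _ => 0); last by rewrite /delta subrr normr0.
  by split; [exact: A_const | rewrite L_const ler01].
have [s [_ s_net]] := L_totally_bounded ltr01.
exists (2 + \big[Num.max/0]_(h <- s) `|h x - h y|) => _ [g [Ag Lg] <-].
have [g' g's [c gc]] := s_net g Ag Lg.
have := le_bigmax_seq 0 g' xpredT (fun h => `|h x - h y|) g's erefl.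
have := gc x; have := gc y.
rewrite /delta (_ : g x - g y = (g x - g' x - c) - (g y - g' y - c) + (g' x - g' y));
  last by ring.
move=> gy gx g'xy; apply: le_trans (ler_normD _ _) _.
by apply: le_trans (lerD (ler_normB _ _) (lexx _)) _; lra.
Qed.

Lemma rho_ub x y {g} : A g -> L g <= 1 -> `|g x - g y| <= rho x y.
Proof. by move=> Ag Lg; apply: sup_upper_bound (rhoL_has_sup x y) _ _; exists g. Qed.

Lemma rho_ge0 x y : 0 <= rho x y.
Proof. by apply: le_trans (rho_ub x y (A_const 0) _); rewrite ?L_const. Qed.

Lemma L_lipschitz_rho {f} x y : A f -> `|f x - f y| <= L f * rho x y.
Proof.
move=> Af; have [/(L_eq0 Af)[c ->] | Lf_neq0] := eqVneq (L f) 0.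
  by rewrite subrr normr0 L_const mul0r.
have Lf_pos : 0 < L f by rewrite lt0r Lf_neq0 L_ge0.
have Lf1 : L (fun z => (L f)^-1 * f z) <= 1.
  by rewrite L_scale // ger0_norm ?invr_ge0 ?(ltW Lf_pos) // mulVf.
have := rho_ub x y (A_scale (L f)^-1 Af) Lf1.
by rewrite -mulrBr normrM ger0_norm ?invr_ge0 ?(ltW Lf_pos) // ler_pdivrMl.
Qed.

Lemma rho_approx x y {e} : 0 < e ->
  exists2 g, A g /\ L g <= 1 & rho x y - e < g x - g y.
Proof.
move=> e0; have [_ [g [Ag Lg] <-]] := sup_adherent e0 (rhoL_has_sup x y).
rewrite /delta => gxy.
have [g_ge | g_lt] := leP 0 (g x - g y).
  by exists g => //; rewrite -(ger0_norm g_ge).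
exists (fun z => - g z); first by split; [exact: A_opp | rewrite L_opp].
by rewrite opprK (addrC (- g x)) -(opprB (g x)) -(ltr0_norm g_lt).
Qed.

Section LipschitzApprox.
Context {K : R} {f : X -> R}.
Hypotheses (K_pos : 0 < K) (Af : A f)
  (f_lip : forall x y, `|f x - f y| <= K * rho x y).

Lemma two_point_approx x y {e} : 0 < e ->
  exists2 h, A h /\ L h <= K & h x = f x /\ h y < f y + e.
Proof.
move=> e0; have [g [Ag Lg] gxy] := rho_approx x y (divr_gt0 e0 K_pos).
have [Ah Lh] := L_affine K (f x - K * g x) (ltW K_pos) Ag.
exists (fun z => K * g z + (f x - K * g x)).
  by split=> //; exact: le_trans Lh (ler_piMr (ltW K_pos) Lg).
split; first by rewrite addrC subrK.
have : K * (rho x y - e / K) < K * (g x - g y) by rewrite ltr_pM2l.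
rewrite !mulrBr mulrCA divff ?gt_eqF // mulr1.
by have := f_lip x y; have := ler_norm (f x - f y); lra.
Qed.

Lemma upper_approx x {e} : 0 < e ->
  exists2 h, A h /\ L h <= K & h x = f x /\ forall z, h z < f z + e.
Proof.
move=> e0; have /choice[h hP] : forall y, exists h,
    (A h /\ L h <= K) /\ (h x = f x /\ h y < f y + e).
  by move=> y; have [h ? ?] := two_point_approx x y e0; exists h.
have [|||||m [Am Lm] [m_lt m_eq]] :=
  @compact_lower_envelope _ _ [set h | A h /\ L h <= K] (fun z => f z + e) h x
    X_compact.
- move=> u v [Au Lu] [Av Lv]; split; first exact: A_min.
  by apply: le_trans (L_min Au Av) _; rewrite ge_max Lu Lv.
- by move=> y; case: (hP y).
- by move=> y; apply: A_cont; case: (hP y) => -[].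
- by move=> z; apply: cvgD; [exact: A_cont | exact: cvg_cst].
- by move=> y; case: (hP y) => _ [].
by exists m => //; split => //; have [y ->] := m_eq x; case: (hP y) => _ [].
Qed.

Lemma uniform_approx {e} : 0 < e ->
  exists2 H, A H /\ L H <= K & forall z, `|f z - H z| < e.
Proof.
move=> e0; have [[x0 _] | X0] := pselect (exists x : X, True); last first.
  exists (fun _ => 0); first by split; [exact: A_const | rewrite L_const ltW].
  by move=> z; case: X0; exists z.
have /choice[h hP] : forall x, exists h,
    (A h /\ L h <= K) /\ (h x = f x /\ forall z, h z < f z + e).
  by move=> x; have [h ? ?] := upper_approx x e0; exists h.
have [|||||m [Am Lm] [m_lt m_eq]] :=
  @compact_lower_envelope _ _
    [set u | A (fun z => - u z) /\ L (fun z => - u z) <= K]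
    (fun z => e - f z) (fun x z => - h x z) x0 X_compact.
- move=> u v [Au Lu] [Av Lv] /=.
  have -> : (fun z => - Num.min (u z) (v z)) = (fun z => Num.max (- u z) (- v z)).
    by apply: funext => z; rewrite oppr_min.
  split; first exact: A_max.
  by apply: le_trans (L_max Au Av) _; rewrite ge_max Lu Lv.
- move=> y /=.
  have -> : (fun z => - - h y z) = h y by apply: funext => z; rewrite opprK.
  by case: (hP y).
- by move=> y z; apply: cvgN; apply: A_cont; case: (hP y) => -[].
- by move=> z; apply: cvgB; [exact: cvg_cst | exact: A_cont].
- by move=> y /=; case: (hP y) => _ [-> _]; lra.
exists (fun z => - m z) => // z; have := m_lt z; have [y ->] := m_eq z.
by case: (hP y) => _ [_ /(_ z)]; rewrite opprK ltr_norml; lra.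
Qed.

End LipschitzApprox.

Lemma L_le_of_uniform_approx {K f} : 0 < K -> A f ->
  (forall e, 0 < e -> exists2 H, A H /\ L H <= K & forall z, `|f z - H z| < e) ->
  L f <= K.
Proof.
move=> K_pos Af f_approx.
have Ki_ge0 : 0 <= K^-1 by rewrite invr_ge0 ltW.
rewrite -[K]mulr1 -ler_pdivrMl // -(ger0_norm Ki_ge0) -L_scale //.
apply: L_closed; first exact: A_scale.
move=> e e0; have [H [AH LH] fH] := f_approx (e * K) (mulr_gt0 e0 K_pos).
exists (fun z => K^-1 * H z).
  split; first exact: A_scale.
  by rewrite L_scale // ger0_norm // ler_pdivrMl // mulr1.
by move=> z; rewrite -mulrBr normrM ger0_norm // ltr_pdivrMl // mulrC.
Qed.

Lemma L_le_of_lipschitz {K f} : 0 <= K -> A f ->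
  (forall x y, `|f x - f y| <= K * rho x y) -> L f <= K.
Proof.
move=> K0 Af f_lip; apply/ler_addgt0Pr => d d_pos.
have Kd_pos : 0 < K + d by rewrite ltr_wpDl.
apply: (L_le_of_uniform_approx Kd_pos Af) => e e0.
apply: (uniform_approx Kd_pos Af _ e0) => x y; apply: le_trans (f_lip x y) _.
by rewrite ler_wpM2r ?rho_ge0 // lerDl ltW.
Qed.

Lemma L_eq_lip_const f : A f -> (L f)%:E = lip_const rho f.
Proof.
move=> Af; apply/eqP; rewrite eq_le (lip_const_le rho f (L_ge0 Af)) ?andbT; last first.
  by move=> x y; exact: L_lipschitz_rho.
have := lip_const_ge0 rho f.
case E : (lip_const rho f) => [M | | ] // M0; last by rewrite leey.
rewrite lee_fin in M0 *; apply: (L_le_of_lipschitz M0 Af) => x y.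
have := rho_ge0 x y; rewrite le_eqVlt => /orP[/eqP rho0 | rho_pos].
  by have := L_lipschitz_rho x y Af; rewrite -rho0 !mulr0.
by apply: (lipschitz_of_lip_const_le rho f _ rho_pos); rewrite E.
Qed.

End LatticeLipNorm.

Theorem corollary8p3 (R : realType) (X : topologicalType)
  (A : set (X -> R)) (L : (X -> R) -> R) :
  compact [set: X] -> hausdorff_space X ->
  dense_lattice_subspace A ->
  lip_norm A L ->
  (forall f g, A f -> A g ->
     L (fun x => Num.max (f x) (g x)) <= Num.max (L f) (L g)) ->
  forall f, A f ->
    (L f)%:E = lip_const (fun x y => rhoL A L (delta x) (delta y)) f.
Proof.
move=> X_compact _ [A_cont [A_const [A_add [A_scale [A_max [A_min _]]]]]].
case=> [[L_add L_scale] L_eq0 L_closed L_totally_bounded] L_max.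
exact: (L_eq_lip_const A L X_compact A_cont A_const A_add A_scale A_max A_min
  L_add L_scale L_eq0 L_closed L_totally_bounded L_max).
Qed.
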